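(* Let $X$ be a real Banach space. Then $X$ is fully Mazur if and only if $S_1(Y)=X^*$ for every norming and norm-closed linear subspace $Y\subset X^*$.
   Context: For $A\subset X^*$, $S_1(A)$ denotes the set of all limits of $w^*$-convergent sequences contained in $A$. A linear subspace $Y\subset X^*$ is norming if $|||x|||=\sup\{x^*(x): x^*\in Y,\ \|x^*\|\le 1\}$ defines an equivalent norm on $X$. $X$ is fully Mazur if for every norming and norm-closed subspace $Y\subset X^*$, every $w^*$-sequentially continuous linear functional $f:Y\to\mathbb{R}$ is $w^*$-continuous. *)

(* X : completeNormedModType R, R : realType.
   The dual X^* is represented as the set [dual X] of continuous linear
   functionals X -> R (as plain functions). *)
From HB Require Import structures.
From mathcomp Require Import all_boot all_order all_algebra.
From mathcomp Require Import all_classical all_reals all_analysis.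
Set Implicit Arguments. Unset Strict Implicit. Unset Printing Implicit Defensive.
Import Order.TTheory GRing.Theory Num.Theory.
Import numFieldNormedType.Exports.
Local Open Scope classical_set_scope.
Local Open Scope ring_scope.

Section Dual.
Variables (R : realType) (X : normedModType R).

Definition is_linear_fun (f : X -> R) : Prop :=
  (forall x y, f (x + y) = f x + f y) /\ (forall (a : R) x, f (a *: x) = a * f x).

Definition dual : set (X -> R) := [set f | is_linear_fun f /\ continuous f].

Definition dual_norm (f : X -> R) : R := sup [set `|f x| | x in [set x : X | `|x| <= 1]].

Definition dual_subspace (Y : set (X -> R)) : Prop :=
  Y `<=` dual /\ Y (fun _ => 0) /\
  (forall f g, Y f -> Y g -> Y (fun x => f x + g x)) /\
  (forall (a : R) f, Y f -> Y (fun x => a * f x)).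

Definition norming_norm (Y : set (X -> R)) (x : X) : R :=
  sup [set f x | f in [set f | Y f /\ dual_norm f <= 1]].

Definition norming (Y : set (X -> R)) : Prop :=
  exists c C : R, 0 < c /\ 0 < C /\
    forall x : X, c * `|x| <= norming_norm Y x /\ norming_norm Y x <= C * `|x|.

Definition norm_closed (Y : set (X -> R)) : Prop :=
  forall f, dual f ->
    (forall e : R, 0 < e -> exists g, Y g /\ dual_norm (fun x => f x - g x) < e) ->
    Y f.

Definition wstar_cvg (u : nat -> X -> R) (f : X -> R) : Prop :=
  forall x : X, (fun n => u n x) @ \oo --> f x.

Definition S1 (A : set (X -> R)) : set (X -> R) :=
  [set f | dual f /\ exists u : nat -> X -> R, (forall n, A (u n)) /\ wstar_cvg u f].

(* linear functional F : Y -> R (values outside Y are irrelevant) *)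
Definition linear_on (Y : set (X -> R)) (F : (X -> R) -> R) : Prop :=
  (forall f g, Y f -> Y g -> F (fun x => f x + g x) = F f + F g) /\
  (forall (a : R) f, Y f -> F (fun x => a * f x) = a * F f).

Definition wstar_seq_continuous (Y : set (X -> R)) (F : (X -> R) -> R) : Prop :=
  forall (u : nat -> X -> R) f, (forall n, Y (u n)) -> Y f -> wstar_cvg u f ->
    F (u n) @[n --> \oo] --> F f.

(* continuity on Y for the (relative) w* topology, whose basic neighbourhoods
   of g are { h : |h x - g x| < d for all x in a finite set s } *)
Definition wstar_continuous (Y : set (X -> R)) (F : (X -> R) -> R) : Prop :=
  forall g, Y g -> forall e : R, 0 < e ->
    exists (s : seq X) (d : R), 0 < d /\
      forall h, Y h -> (forall x, x \in s -> `|h x - g x| < d) -> `|F h - F g| < e.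

Definition fully_Mazur : Prop :=
  forall Y : set (X -> R), dual_subspace Y -> norming Y -> norm_closed Y ->
    forall F : (X -> R) -> R, linear_on Y F -> wstar_seq_continuous Y F ->
      wstar_continuous Y F.

End Dual.

(* If S_1(Y) = X^* for every norming closed Y, let F be a w*-sequentially
   continuous linear functional on such a Y.  F is bounded, and if F <> 0 its
   kernel Z is not norming: otherwise Z is norming and closed, so S_1(Z) = X^*
   would contain some y0 with F y0 = 1, which no sequence of Z can w*-approach
   by sequential continuity.  A non-norming kernel yields, for every eta > 0, a
   point w with |h w - F h| <= eta ||h|| on Y; these points form a Cauchy
   sequence whose limit l satisfies F h = h l, so F is w*-continuous.
   Conversely, if f lies in X^* but not in S_1(Y), then f is at positive
   distance from Y and Y + Rf is again norming and closed.  The coefficient of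
   f is w*-sequentially continuous on Y + Rf (a sequence along which the
   coefficients stay away from their limit rescales into a sequence of Y that
   w*-converges to f), but it is not w*-continuous, because on every finite
   set f agrees with some element of Y. *)

From mathcomp Require Import all_boot all_order all_algebra.
From mathcomp Require Import all_classical all_reals all_analysis.
From mathcomp Require Import ring lra.
Import Order.TTheory GRing.Theory Num.Theory.
Import numFieldNormedType.Exports.
Set Implicit Arguments. Unset Strict Implicit. Unset Printing Implicit Defensive.
Local Open Scope classical_set_scope.
Local Open Scope ring_scope.

Section RealSequences.
Variable R : realType.

Lemma harmonicM_lt (C e : R) : 0 < e -> \forall n \near \oo, n.+1%:R^-1 * C < e.
Proof.
move=> e0; have hC : (fun n => n.+1%:R^-1 * C) @ \oo --> (0 : R).
  by rewrite -(mul0r C); apply: cvgM; [exact: cvg_harmonic | exact: cvg_cst].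
by apply: filterS (cvgr0_norm_lt _ hC _ e0) => n; apply: le_lt_trans; exact: ler_norm.
Qed.

Lemma cvg_cst_eq (c d : R) : (fun _ : nat => c) @ \oo --> d -> c = d.
Proof. by move=> cd; exact: (cvg_unique _ (cvg_cst c) cd). Qed.

Lemma cvg_harmonic_bound (a : nat -> R) (l K : R) :
  (forall n, `|l - a n| <= n.+1%:R^-1 * K) -> a n @[n --> \oo] --> l.
Proof.
move=> aK; apply/cvgrPdist_lt => e e0; near=> n.
by apply: le_lt_trans (aK n) _; near: n; exact: harmonicM_lt.
Unshelve. all: by end_near. Qed.

Lemma eq0_le_harmonicM (x K : R) : (forall n, `|x| <= n.+1%:R^-1 * K) -> x = 0.
Proof.
move=> xK; apply/normr0_eq0/eqP; rewrite eq_le normr_ge0 andbT.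
apply/ler_addgt0Pr => e e0; rewrite add0r; near \oo => n.
by apply: le_trans (xK n) (ltW _); near: n; exact: harmonicM_lt.
Unshelve. all: by end_near. Qed.

Lemma cauchy_harmonic (V : completeNormedModType R) (w : nat -> V) (C : R) :
  (forall n m, `|w n - w m| <= (n.+1%:R^-1 + m.+1%:R^-1) * C) ->
  exists l, forall m, `|l - w m| <= m.+1%:R^-1 * C.
Proof.
move=> wC.
have /cauchy_cvgP/cvg_ex [l wl] : cauchy (w @ \oo).
  apply: cauchy_exP => e e0; near \oo => N; exists (w N).
  change (\forall n \near \oo, ball (w N) e (w n)); near=> n.
  rewrite -ball_normE /=; apply: le_lt_trans (wC N n) _.
  rewrite mulrDl (splitr e) ltrD //; [near: N | near: n]; by apply: harmonicM_lt; rewrite divr_gt0.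
exists l => m; apply/ler_addgt0Pr => e e0; near \oo => n.
have wn : `|l - w n| < e / 2 by near: n; apply: cvgr_dist_lt => //; rewrite divr_gt0.
have Cn : n.+1%:R^-1 * C < e / 2 by near: n; by apply: harmonicM_lt; rewrite divr_gt0.
apply: le_trans (ler_distD (w n) l (w m)) _.
rewrite [e]splitr addrCA lerD ?(ltW wn) //; apply: le_trans (wC n m) _.
by rewrite mulrDl [leRHS]addrC lerD2r ltW.
Unshelve. all: by end_near. Qed.

Lemma near_oo_subseq (P : nat -> Prop) (m : nat -> nat) :
  (forall N, (N <= m N)%N) -> (\forall n \near \oo, P n) -> \forall N \near \oo, P (m N).
Proof. by move=> mN [K _ PK]; exists K => // N /= KN; apply: PK; exact: leq_trans KN (mN N). Qed.

Lemma not_cvg_far (a : nat -> R) (l : R) : ~ a n @[n --> \oo] --> l ->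
  exists2 d, 0 < d & exists m : nat -> nat, forall N, (N <= m N)%N /\ d <= `|l - a (m N)|.
Proof.
move=> ncvg; apply: contrapT => nofar; apply: ncvg; apply/cvgrPdist_lt => d d0.
apply: contrapT => not_ev; apply: nofar; exists d => //.
suff /choice [m mP] : forall N, exists n, (N <= n)%N /\ d <= `|l - a n| by exists m.
move=> N; apply: contrapT => noN; apply: not_ev; exists N => // n /= Nn.
by rewrite ltNge; apply/negP => dle; apply: noN; exists n.
Qed.

End RealSequences.

Section DualNorm.
Variables (R : realType) (X : normedModType R).
Implicit Types (f g : X -> R) (x : X) (Y : set (X -> R)).

Lemma linear_fun0 f : is_linear_fun f -> f 0 = 0.
Proof. by move=> [_ fZ]; rewrite -(scale0r (0 : X)) fZ mul0r. Qed.

Lemma linear_funB f x x' : is_linear_fun f -> f (x - x') = f x - f x'.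
Proof. by move=> [fD fZ]; rewrite fD -scaleN1r fZ mulN1r. Qed.

Lemma is_linear_funB f g : is_linear_fun f -> is_linear_fun g ->
  is_linear_fun (fun x => f x - g x).
Proof. by move=> [fD fZ] [gD gZ]; split=> *; rewrite ?fD ?gD ?fZ ?gZ; ring. Qed.

Lemma dual0 : dual (fun _ : X => 0).
Proof. by split; [split=> *; rewrite ?addr0 ?mulr0 | move=> x; exact: cvg_cst]. Qed.

Lemma dualD f g : dual f -> dual g -> dual (fun x => f x + g x).
Proof.
move=> [[fD fZ] fc] [[gD gZ] gc]; split; last by move=> x; apply: cvgD; [exact: fc | exact: gc].
by split=> *; rewrite ?fD ?gD ?fZ ?gZ; ring.
Qed.

Lemma dualZ a f : dual f -> dual (fun x => a * f x).
Proof.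
move=> [[fD fZ] fc]; split; last by move=> x; apply: cvgM; [exact: cvg_cst | exact: fc].
by split=> *; rewrite ?fD ?fZ; ring.
Qed.

Lemma dualB f g : dual f -> dual g -> dual (fun x => f x - g x).
Proof.
move=> [[fD fZ] fc] [[gD gZ] gc]; split; last by move=> x; apply: cvgB; [exact: fc | exact: gc].
by split=> *; rewrite ?fD ?gD ?fZ ?gZ; ring.
Qed.

Lemma dual_bounded f : dual f -> exists2 M, 0 < M & forall x, `|f x| <= M * `|x|.
Proof.
move=> [fL fc]; have /cvgrPdist_lt/(_ 1 ltr01) := fc 0.
rewrite -nbhs_nearE => /nbhs_norm0P [d /= d0 fd].
exists (2 / d) => [|x]; first by rewrite divr_gt0.
have [->|x0] := eqVneq x 0; first by rewrite linear_fun0 // !normr0 mulr0.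
have nx : 0 < `|x| by rewrite normr_gt0.
set a := d / (2 * `|x|); have a0 : 0 < a by rewrite divr_gt0 // mulr_gt0.
have ax : a * `|x| = d / 2 by rewrite /a; field; rewrite gt_eqF.
have : `|a *: x| < d by rewrite normrZ gtr0_norm // ax; lra.
move=> /fd; rewrite linear_fun0 // sub0r normrN fL.2 normrM gtr0_norm // => afx.
have -> : 2 / d * `|x| = a^-1 by rewrite /a invf_div mulrAC.
by rewrite -(ler_pM2l a0) mulfV ?gt_eqF // ltW.
Qed.

Lemma dual_norm_has_sup f : dual f -> has_sup [set `|f x| | x in [set x : X | `|x| <= 1]].
Proof.
move=> /dual_bounded [M M0 fM]; split; first by exists `|f 0|, 0; rewrite //= normr0.
exists M => _ [x /= x1 <-]; apply: le_trans (fM x) _.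
by rewrite ler_piMr // ltW.
Qed.

Lemma dual_norm_ub f x : dual f -> `|x| <= 1 -> `|f x| <= dual_norm f.
Proof. by move=> /dual_norm_has_sup fS x1; apply: sup_upper_bound => //; exists x. Qed.

Lemma dual_norm_ge0 f : dual f -> 0 <= dual_norm f.
Proof. by move=> Df; apply: le_trans (normr_ge0 _) (dual_norm_ub (x := 0) Df _); rewrite normr0. Qed.

Lemma ler_dual_norm f x : dual f -> `|f x| <= dual_norm f * `|x|.
Proof.
move=> Df; have [->|x0] := eqVneq x 0.
  by rewrite linear_fun0 ?normr0 ?mulr0 //; case: Df.
have nx : 0 < `|x| by rewrite normr_gt0.
have : `|(`|x|^-1 *: x)| <= 1 by rewrite normrZ normrV ?unitfE ?gt_eqF // normr_id mulVf ?gt_eqF.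
move=> /(dual_norm_ub Df); rewrite Df.1.2 normrM normrV ?unitfE ?gt_eqF // normr_id.
by rewrite mulrC ler_pdivrMr.
Qed.

Lemma dual_norm_le f K : 0 <= K -> (forall x, `|f x| <= K * `|x|) -> dual_norm f <= K.
Proof.
move=> K0 fK; apply: ge_sup; first by exists `|f 0|, 0; rewrite //= normr0.
by move=> _ [x /= x1 <-]; apply: le_trans (fK x) _; rewrite ler_piMr.
Qed.

Lemma dual_norm0 : dual_norm (fun _ : X => 0) = 0.
Proof.
apply/eqP; rewrite eq_le dual_norm_ge0 ?andbT; last exact: dual0.
by apply: dual_norm_le => // x; rewrite normr0 mul0r.
Qed.

Lemma ler_dual_normZ a f : dual f -> dual_norm (fun x => a * f x) <= `|a| * dual_norm f.
Proof.
move=> Df; apply: dual_norm_le => [|x]; first by rewrite mulr_ge0 ?dual_norm_ge0.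
by rewrite normrM -mulrA ler_wpM2l // ler_dual_norm.
Qed.

Lemma ler_dual_normD f g : dual f -> dual g ->
  dual_norm (fun x => f x + g x) <= dual_norm f + dual_norm g.
Proof.
move=> Df Dg; apply: dual_norm_le => [|x]; first by rewrite addr_ge0 ?dual_norm_ge0.
by rewrite mulrDl; apply: le_trans (ler_normD _ _) (lerD _ _); exact: ler_dual_norm.
Qed.

Lemma ler_dual_normB f g : dual f -> dual g ->
  dual_norm (fun x => f x - g x) <= dual_norm f + dual_norm g.
Proof.
move=> Df Dg; have -> : (fun x => f x - g x) = (fun x => f x + (-1) * g x).
  by apply: funext => x; rewrite mulN1r.
apply: le_trans (ler_dual_normD Df (dualZ _ Dg)) _.
by rewrite lerD2l; apply: le_trans (ler_dual_normZ _ Dg) _; rewrite normrN normr1 mul1r.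
Qed.

Lemma norm_closed_dist_gt0 Y f : norm_closed Y -> dual f -> ~ Y f ->
  exists2 e, 0 < e & forall y, Y y -> e <= dual_norm (fun x => f x - y x).
Proof.
move=> Yc Df Yf; apply: contrapT => nodist; apply: Yf; apply: Yc => // e e0.
apply: contrapT => nonear; apply: nodist; exists e => // y Yy.
by rewrite leNgt; apply/negP => fye; apply: nonear; exists y.
Qed.

End DualNorm.

Section Subspace.
Variables (R : realType) (X : normedModType R) (Y : set (X -> R)).
Hypothesis HY : dual_subspace Y.
Implicit Types (f g : X -> R) (x : X).

Lemma subspace_dual f : Y f -> dual f.
Proof. exact: HY.1. Qed.

Lemma subspace0 : Y (fun _ => 0).
Proof. exact: HY.2.1. Qed.

Lemma subspaceD f g : Y f -> Y g -> Y (fun x => f x + g x).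
Proof. exact: HY.2.2.1. Qed.

Lemma subspaceZ a f : Y f -> Y (fun x => a * f x).
Proof. exact: HY.2.2.2. Qed.

Lemma subspaceB f g : Y f -> Y g -> Y (fun x => f x - g x).
Proof.
move=> Yf Yg; have -> : (fun x => f x - g x) = (fun x => f x + (-1) * g x).
  by apply: funext => x; rewrite mulN1r.
by apply: subspaceD => //; exact: subspaceZ.
Qed.

Lemma norming_norm_has_sup x : has_sup [set f x | f in [set f | Y f /\ dual_norm f <= 1]].
Proof.
split; first by exists 0, (fun _ => 0); rewrite //= dual_norm0; split; [exact: subspace0 | exact: ler01].
exists `|x| => _ [f [Yf f1] <-]; apply: le_trans (ler_norm _) _.
apply: le_trans (ler_dual_norm _ (subspace_dual Yf)) _.
by rewrite ler_piMl.
Qed.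

Lemma norming_norm_ge f x : Y f -> dual_norm f <= 1 -> f x <= norming_norm Y x.
Proof. by move=> Yf f1; apply: sup_upper_bound; [exact: norming_norm_has_sup | exists f]. Qed.

Lemma norming_norm_ge0 x : 0 <= norming_norm Y x.
Proof. by apply: (norming_norm_ge _ subspace0); rewrite dual_norm0. Qed.

Lemma norming_norm_gt x a : a < norming_norm Y x ->
  exists f, [/\ Y f, dual_norm f <= 1 & a < f x].
Proof.
by move=> /(sup_gt (norming_norm_has_sup x).1) [_ [f [Yf f1] <-] afx]; exists f.
Qed.

Lemma norming_norm_le x K :
  0 <= K -> (forall f, Y f -> `|f x| <= K * dual_norm f) -> norming_norm Y x <= K.
Proof.
move=> K0 fK; apply: ge_sup; first exact: (norming_norm_has_sup x).1.
move=> _ [f [Yf f1] <-]; apply: le_trans (ler_norm _) (le_trans (fK f Yf) _).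
by rewrite ler_piMr.
Qed.

Lemma norming_norm_le_norm x : norming_norm Y x <= `|x|.
Proof.
by apply: norming_norm_le => // f Yf; rewrite mulrC; exact: ler_dual_norm (subspace_dual Yf).
Qed.

Lemma ler_norming_norm f x : Y f -> `|f x| <= norming_norm Y x * dual_norm f.
Proof.
move=> Yf; have Df := subspace_dual Yf.
have [f0|f_neq0] := eqVneq (dual_norm f) 0.
  by have := ler_dual_norm x Df; rewrite f0 !mul0r mulr0.
have f_gt0 : 0 < dual_norm f by rewrite lt_neqAle eq_sym f_neq0 dual_norm_ge0.
set t := (dual_norm f)^-1; have t0 : 0 < t by rewrite invr_gt0.
have unit_ge a : `|a| = t -> a * f x <= norming_norm Y x.
  move=> aE; apply: (norming_norm_ge (f := fun y => a * f y)); first exact: subspaceZ.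
  by apply: le_trans (ler_dual_normZ a Df) _; rewrite aE mulVf.
have : `|t * f x| <= norming_norm Y x.
  rewrite ler_norml unit_ge ?gtr0_norm // andbT lerNl -mulNr.
  by apply: unit_ge; rewrite normrN gtr0_norm.
by rewrite normrM gtr0_norm // -ler_pdivlMl // invrK mulrC.
Qed.

Lemma norming_separating x : norming Y -> (forall f, Y f -> f x = 0) -> x = 0.
Proof.
move=> [c [C [c0 [_ cC]]]] Yx0; apply/normr0_eq0/eqP.
rewrite eq_le normr_ge0 andbT -(pmulr_rle0 _ c0); apply: le_trans (cC x).1 _.
by apply: norming_norm_le => // f Yf; rewrite Yx0 // normr0 mul0r.
Qed.

Lemma not_norming_lt : ~ norming Y -> forall c, 0 < c -> exists x, norming_norm Y x < c * `|x|.
Proof.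
move=> YN c c0; apply: contrapT => nlt; apply: YN; exists c, 1; do 2!split => //; move=> x; split.
  by rewrite leNgt; apply/negP => lt; apply: nlt; exists x.
by rewrite mul1r norming_norm_le_norm.
Qed.

End Subspace.

Section Interpolation.
Variables (R : realType) (X : normedModType R) (Y : set (X -> R)).
Hypotheses (HY : dual_subspace Y) (Ysep : forall x, (forall f, Y f -> f x = 0) -> x = 0).

Lemma separate_or_span (s : seq X) a :
  (exists2 y, Y y & {in s, forall x, y x = 0} /\ y a = 1) \/
  (forall g, is_linear_fun g -> {in s, forall x, g x = 0} -> g a = 0).
Proof.
elim: s a => [|b s IH] a.
  have [->|[y Yy ya]] : a = 0 \/ exists2 y, Y y & y a != 0.
    case: (pselect (a = 0)) => [|a0]; [by left | right].
    apply: contrapT => noy; apply: a0; apply: Ysep => f Yf; apply: contrapT => /eqP fa.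
    by apply: noy; exists f.
  by right=> g gL _; rewrite linear_fun0.
  left; exists (fun x => (y a)^-1 * y x); first exact: subspaceZ.
  by split=> [x|]; rewrite ?in_nil // mulVf.
case: (IH b) => [[yb Yyb [ybs yb1]] | bspan].
  case: (IH (a - yb a *: b)) => [[y Yy [ys ya']] | a'span].
    have yL := (subspace_dual HY Yy).1.
    left; exists (fun x => y x - y b * yb x); first by apply: subspaceB => //; exact: subspaceZ.
    split=> [x|]; last by rewrite -ya' linear_funB // yL.2 mulrC.
    rewrite in_cons => /predU1P [->|xs]; first by rewrite yb1 mulr1 subrr.
    by rewrite ys // ybs // mulr0 subr0.
  right=> g gL gs; have gb : g b = 0 by apply: gs; exact: mem_head.
  have := a'span g gL (fun x xs => gs x (mem_behead (s := b :: s) xs)).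
  by rewrite linear_funB // gL.2 gb mulr0 subr0.
case: (IH a) => [[y Yy [ys ya]] | aspan].
  left; exists y => //; split=> // x; rewrite in_cons => /predU1P [->|]; last exact: ys.
  exact: bspan (subspace_dual HY Yy).1 ys.
by right=> g gL gs; apply: aspan gL (fun x xs => gs x (mem_behead (s := b :: s) xs)).
Qed.

Lemma separating_interpolation (s : seq X) g : is_linear_fun g ->
  exists2 y, Y y & {in s, forall x, y x = g x}.
Proof.
move=> gL; elim: s => [|b s [y1 Yy1 y1s]]; first by exists (fun _ => 0); first exact: subspace0.
have y1L := (subspace_dual HY Yy1).1.
case: (separate_or_span s b) => [[yb Yyb [ybs yb1]] | bspan].
  exists (fun x => y1 x + (g b - y1 b) * yb x); first by apply: subspaceD => //; exact: subspaceZ.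
  move=> x; rewrite in_cons => /predU1P [->|xs]; first by rewrite yb1 mulr1 addrC subrK.
  by rewrite ybs // mulr0 addr0 y1s.
exists y1 => // x; rewrite in_cons => /predU1P [->|]; last exact: y1s.
apply/eqP; rewrite eq_sym -subr_eq0; apply/eqP.
by apply: (bspan (fun z => g z - y1 z)) => [|z zs]; [exact: is_linear_funB | rewrite y1s ?subrr].
Qed.

End Interpolation.

Section Kernel.
Variables (R : realType) (X : normedModType R) (Y : set (X -> R)) (F : (X -> R) -> R).
Hypotheses (HY : dual_subspace Y) (FL : linear_on Y F).
Implicit Types (f g h : X -> R) (x : X).

Lemma linear_on0 : F (fun _ => 0) = 0.
Proof.
rewrite -[RHS](mul0r (F (fun _ => 0))) -FL.2; last exact: subspace0.
by congr F; apply: funext => x; rewrite mul0r.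
Qed.

Lemma linear_onB f g : Y f -> Y g -> F (fun x => f x - g x) = F f - F g.
Proof.
move=> Yf Yg; have -> : (fun x => f x - g x) = (fun x => f x + (-1) * g x).
  by apply: funext => x; rewrite mulN1r.
by rewrite FL.1 ?FL.2 ?mulN1r //; exact: subspaceZ.
Qed.

Lemma seq_continuous_bounded : wstar_seq_continuous Y F ->
  exists2 M, 0 < M & forall y, Y y -> `|F y| <= M * dual_norm y.
Proof.
move=> Fseq; apply: contrapT => unbounded.
have /choice [y yP] : forall n : nat, exists y, Y y /\ n.+1%:R * dual_norm y < `|F y|.
  move=> n; apply: contrapT => nbig; apply: unbounded; exists n.+1%:R => // y Yy.
  by rewrite leNgt; apply/negP => lt; apply: nbig; exists y.
have Dy n : dual (y n) := subspace_dual HY (yP n).1.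
have Fy_gt0 n : 0 < `|F (y n)|.
  by apply: le_lt_trans (yP n).2; rewrite mulr_ge0 // dual_norm_ge0.
pose u n x := (F (y n))^-1 * y n x.
have Yu n : Y (u n) := subspaceZ HY _ (yP n).1.
have Fu n : F (u n) = 1 by rewrite FL.2 ?mulVf -?normr_gt0 //; exact: (yP n).1.
have u0 : wstar_cvg u (fun _ => 0).
  move=> x; apply: (@cvg_harmonic_bound _ _ _ `|x|) => n.
  rewrite sub0r normrN; apply: le_trans (ler_dual_norm _ (subspace_dual HY (Yu n))) _.
  rewrite ler_wpM2r //; apply: le_trans (ler_dual_normZ _ (Dy n)) _.
  by rewrite normrV ?unitfE -?normr_gt0 // mulrC ler_pdivrMr // ler_pdivlMl // ltW ?(yP n).2.
have := Fseq u _ Yu (subspace0 HY) u0.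
rewrite linear_on0 (_ : (fun n => F (u n)) = fun=> 1); last exact: funext.
by move/cvg_cst_eq/eqP; rewrite oner_eq0.
Qed.

Definition kernel := [set z | Y z /\ F z = 0].

Lemma kernel_subspace : dual_subspace kernel.
Proof.
split; first by move=> z [/(subspace_dual HY)].
split; first by split; [exact: subspace0 | exact: linear_on0].
split=> [f g [Yf Ff] [Yg Fg] | a f [Yf Ff]].
  by split; [exact: subspaceD | rewrite FL.1 // Ff Fg addr0].
by split; [exact: subspaceZ | rewrite FL.2 // Ff mulr0].
Qed.

Variables (y0 : X -> R) (M : R).
Hypotheses (Yy0 : Y y0) (Fy0 : F y0 = 1).
Hypotheses (M0 : 0 < M) (FM : forall y, Y y -> `|F y| <= M * dual_norm y).

Lemma kernel_notin_S1 : wstar_seq_continuous Y F -> ~ S1 kernel y0.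
Proof.
move=> Fseq [_ [u [Ku uy0]]].
have := Fseq u y0 (fun n => (Ku n).1) Yy0 uy0.
rewrite Fy0 (_ : (fun n => F (u n)) = fun=> 0); last by apply: funext => n; exact: (Ku n).2.
by move/cvg_cst_eq/eqP; rewrite eq_sym oner_eq0.
Qed.

Lemma kernel_closed : norm_closed Y -> norm_closed kernel.
Proof.
move=> Yc f Df f_lim; have Yf : Y f.
  by apply: Yc => // e e0; have [g [[Yg _] fg]] := f_lim e e0; exists g.
split=> //; apply: contrapT => /eqP Ff.
have FfM : 0 < `|F f| / M by rewrite divr_gt0 ?normr_gt0.
have [g [[Yg Fg] fg]] := f_lim _ FfM.
have : M * dual_norm (fun x => f x - g x) < `|F f| by rewrite mulrC -ltr_pdivlMr.
by apply/negP; rewrite -leNgt; have := FM (subspaceB HY Yf Yg); rewrite linear_onB // Fg subr0.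
Qed.

Lemma kernel_defect_bound h x : Y h ->
  `|h x - F h * y0 x| <= (1 + M * dual_norm y0) * norming_norm kernel x * dual_norm h.
Proof.
move=> Yh; have Dh := subspace_dual HY Yh; have Dy0 := subspace_dual HY Yy0.
have Yz : Y (fun x => h x - F h * y0 x) by apply: subspaceB => //; exact: subspaceZ.
have Kz : kernel (fun x => h x - F h * y0 x).
  by split=> //; rewrite linear_onB // ?FL.2 ?Fy0 ?mulr1 ?subrr //; exact: subspaceZ.
have z_le : dual_norm (fun x => h x - F h * y0 x) <= (1 + M * dual_norm y0) * dual_norm h.
  apply: le_trans (ler_dual_normB Dh (dualZ _ Dy0)) _.
  apply: le_trans (lerD (lexx _) (ler_dual_normZ _ Dy0)) _.
  rewrite mulrDl mul1r lerD2l mulrAC ler_wpM2r ?dual_norm_ge0 //; exact: FM.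
apply: le_trans (ler_norming_norm kernel_subspace x Kz) _.
rewrite mulrAC [_ * norming_norm _ _]mulrC ler_wpM2l //; exact/norming_norm_ge0/kernel_subspace.
Qed.

Lemma kernel_small_defect : ~ norming kernel -> forall p, 0 < p ->
  exists2 x, 0 < `|x| & forall h, Y h -> `|h x - F h * y0 x| <= p * `|x| * dual_norm h.
Proof.
move=> kerNN p p0.
have K0 : 0 < 1 + M * dual_norm y0.
  by rewrite ltr_pwDl // mulr_ge0 ?(dual_norm_ge0 (subspace_dual HY Yy0)) // ltW.
have [x xker] := not_norming_lt kernel_subspace kerNN (divr_gt0 p0 K0).
exists x => [|h Yh].
  by have := le_lt_trans (norming_norm_ge0 kernel_subspace x) xker; rewrite pmulr_rgt0 ?divr_gt0.
apply: le_trans (kernel_defect_bound x Yh) _.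
rewrite ler_wpM2r ?(dual_norm_ge0 (subspace_dual HY Yh)) //.
by rewrite -ler_pdivlMl // mulrA (mulrC _ p); exact: ltW.
Qed.

Lemma approx_evaluation : norming Y -> ~ norming kernel ->
  forall eta, 0 < eta -> exists w, forall h, Y h -> `|h w - F h| <= eta * dual_norm h.
Proof.
move=> [c [C [c0 [_ cY]]]] kerNN eta eta0.
have Meta : 0 < M + eta by rewrite addr_gt0.
(* [p] is chosen so that both [4 p <= c] and [4 p M <= c eta]. *)
have [p p0 pE] : exists2 p, 0 < p & p * (4 * (M + eta)) = c * eta.
  by exists (c * eta / (4 * (M + eta))); rewrite ?divr_gt0 ?mulr_gt0 ?divfK ?gt_eqF ?mulr_gt0.
have p_le : 4 * p <= c.
  by rewrite -(ler_pM2r Meta) (mulrC 4 p) -mulrA pE ler_pM2l // lerDr ltW.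
have pM_le : 4 * p * M <= c * eta.
  apply: le_trans (_ : 4 * p * M <= 4 * p * (M + eta)) _.
    by rewrite ler_pM2l ?mulr_gt0 // lerDl ltW.
  by rewrite -pE (mulrC 4 p) -mulrA.
have [x x_gt0 defect] := kernel_small_defect kerNN p0.
have [y [Yy y1 yx]] : exists y, [/\ Y y, dual_norm y <= 1 & c * `|x| / 2 < y x].
  apply: norming_norm_gt => //; apply: lt_le_trans (cY x).1.
  by rewrite gtr_pMr ?invf_lt1 ?ltr1n // mulr_gt0.
have Fy_le : `|F y| <= M by apply: le_trans (FM Yy) _; rewrite ler_piMr // ltW.
have key : c * `|x| < 4 * M * `|y0 x|.
  have : y x <= p * `|x| + M * `|y0 x|.
    rewrite -[y x](subrK (F y * y0 x)); apply: lerD.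
      apply: le_trans (ler_norm _) (le_trans (defect _ Yy) _).
      by rewrite ler_piMr // mulr_ge0 // ltW.
    by apply: le_trans (ler_norm _) _; rewrite normrM ler_wpM2r.
  have : 4 * (p * `|x|) <= c * `|x| by rewrite mulrA ler_wpM2r // ltW.
  lra.
have y0x_gt0 : 0 < `|y0 x|.
  by have := le_lt_trans (ltW (mulr_gt0 c0 x_gt0)) key; rewrite pmulr_rgt0 // mulr_gt0.
have px_le : p * `|x| <= eta * `|y0 x|.
  have : 4 * p * M * `|x| <= c * eta * `|x| by rewrite ler_wpM2r.
  have : eta * (c * `|x|) <= eta * (4 * M * `|y0 x|) by rewrite ler_wpM2l // ltW.
  nra.
exists ((y0 x)^-1 *: x) => h Yh; have Dh := subspace_dual HY Yh.
have -> : h ((y0 x)^-1 *: x) - F h = (y0 x)^-1 * (h x - F h * y0 x).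
  by rewrite Dh.1.2; field; rewrite -normr_gt0.
rewrite normrM normrV ?unitfE -?normr_gt0 // ler_pdivrMl //.
apply: le_trans (defect h Yh) _.
by rewrite mulrA ler_wpM2r ?dual_norm_ge0 // (mulrC _ eta).
Qed.

End Kernel.

Lemma evaluation_wstar_continuous (R : realType) (X : normedModType R)
    (Y : set (X -> R)) (F : (X -> R) -> R) (l : X) :
  (forall h, Y h -> F h = h l) -> wstar_continuous Y F.
Proof.
move=> Fl g Yg e e0; exists [:: l], e; split=> // h Yh /(_ l (mem_head _ _)).
by rewrite !Fl.
Qed.

Lemma evaluation_of_approx (R : realType) (X : completeNormedModType R)
    (Y : set (X -> R)) (F : (X -> R) -> R) : dual_subspace Y -> norming Y ->
  (forall n : nat, exists w, forall h, Y h -> `|h w - F h| <= n.+1%:R^-1 * dual_norm h) ->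
  exists l, forall h, Y h -> F h = h l.
Proof.
move=> HY [c [C [c0 [_ cY]]]] /choice [w wF].
have [l lw] : exists l, forall m, `|l - w m| <= m.+1%:R^-1 * c^-1.
  apply: cauchy_harmonic => n m; rewrite ler_pdivlMr // mulrC.
  apply: le_trans (cY _).1 (norming_norm_le HY _ _) => [|f Yf].
    by rewrite addr_ge0 // invr_ge0.
  rewrite linear_funB ?mulrDl; last exact: (subspace_dual HY Yf).1.
  apply: le_trans (ler_distD (F f) _ _) (lerD (wF n f Yf) _).
  by rewrite distrC; exact: wF.
exists l => h Yh; have Dh := subspace_dual HY Yh.
apply/eqP; rewrite -subr_eq0; apply/eqP.
apply: (@eq0_le_harmonicM _ _ (dual_norm h + dual_norm h / c)) => m.
rewrite mulrDr; apply: le_trans (ler_distD (h (w m)) _ _) (lerD _ _).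
  by rewrite distrC; exact: wF.
rewrite -linear_funB; last exact: Dh.1.
apply: le_trans (ler_dual_norm _ Dh) _.
by rewrite distrC mulrCA ler_wpM2l ?dual_norm_ge0 //; exact: lw.
Qed.

Lemma S1_full_fully_Mazur (R : realType) (X : completeNormedModType R) :
  (forall Y : set (X -> R), dual_subspace Y -> norming Y -> norm_closed Y -> S1 Y = @dual R X) ->
  fully_Mazur X.
Proof.
move=> S1full Y HY YN Yc F FL Fseq.
have [M M0 FM] := seq_continuous_bounded HY FL Fseq.
suff [l Fl] : exists l, forall h, Y h -> F h = h l by exact: evaluation_wstar_continuous Fl.
case: (pselect (exists2 y1, Y y1 & F y1 != 0)) => [[y1 Yy1 Fy1]|F0].
  pose y0 x := (F y1)^-1 * y1 x.
  have Yy0 : Y y0 := subspaceZ HY _ Yy1.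
  have Fy0 : F y0 = 1 by rewrite FL.2 // mulVf.
  have kerNN : ~ norming (kernel Y F).
    move=> kerN; apply: (kernel_notin_S1 Yy0 Fy0 Fseq).
    rewrite (S1full _ (kernel_subspace HY FL) kerN (kernel_closed HY FL M0 FM Yc)).
    exact: (subspace_dual HY Yy0).
  apply: (evaluation_of_approx HY YN) => n.
  by apply: (approx_evaluation HY FL Yy0 Fy0 M0 FM YN kerNN); rewrite invr_gt0.
exists 0 => h Yh; rewrite linear_fun0; last exact: (subspace_dual HY Yh).1.
by apply/eqP; apply: contrapT => /negP Fh; apply: F0; exists h.
Qed.

Section LineExtension.
Variables (R : realType) (X : normedModType R) (Y : set (X -> R)) (f : X -> R) (e : R).
Hypotheses (HY : dual_subspace Y) (Df : dual f) (e0 : 0 < e)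
  (dist_fY : forall y, Y y -> e <= dual_norm (fun x => f x - y x)).
Implicit Types (g h y : X -> R) (x : X).

Definition line_ext := [set h | exists y t, Y y /\ h = (fun x => y x + t * f x)].

(* Junk value [0] outside [line_ext]; on [line_ext] the coefficient is unique
   by [line_coef_unique]. *)
Definition line_coef h : R := xget 0 [set t | exists y, Y y /\ h = (fun x => y x + t * f x)].

Lemma line_ext_subspace : dual_subspace line_ext.
Proof.
split; first by move=> _ [y [t [Yy ->]]]; exact: (dualD (subspace_dual HY Yy) (dualZ t Df)).
split; first by exists (fun _ => 0), 0; split; [exact: subspace0 | apply: funext => x; rewrite mul0r addr0].
split=> [_ _ [y1 [t1 [Y1 ->]]] [y2 [t2 [Y2 ->]]] | a _ [y [t [Yy ->]]]].
  exists (fun x => y1 x + y2 x), (t1 + t2); split; first exact: subspaceD.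
  by apply: funext => x; ring.
exists (fun x => a * y x), (a * t); split; first exact: subspaceZ.
by apply: funext => x; ring.
Qed.

Lemma subset_line_ext : Y `<=` line_ext.
Proof. by move=> y Yy; exists y, 0; split=> //; apply: funext => x; rewrite mul0r addr0. Qed.

Lemma line_ext_norming : norming Y -> norming line_ext.
Proof.
move=> [c [C [c0 [_ cY]]]]; exists c, 1; do 2!split=> //; move=> x; split.
  apply: le_trans (cY x).1 (norming_norm_le HY _ _) => // [|g Yg].
    exact: (norming_norm_ge0 line_ext_subspace x).
  exact: (ler_norming_norm line_ext_subspace x (subset_line_ext Yg)).
by rewrite mul1r (norming_norm_le_norm line_ext_subspace).
Qed.

Lemma ler_line_coef y t : Y y -> `|t| * e <= dual_norm (fun x => y x + t * f x).
Proof.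
move=> Yy; have Dyf s : dual (fun x => y x + s * f x).
  exact: (dualD (subspace_dual HY Yy) (dualZ s Df)).
have [->|t0] := eqVneq t 0; first by rewrite normr0 mul0r (dual_norm_ge0 (Dyf 0)).
have := dist_fY (subspaceZ HY (- t^-1) Yy).
have -> : (fun x => f x - - t^-1 * y x) = (fun x => t^-1 * (y x + t * f x)).
  by apply: funext => x; field.
move=> /le_trans/(_ (ler_dual_normZ _ (Dyf t))).
by rewrite normrV ?unitfE // ler_pdivlMl ?normr_gt0.
Qed.

Lemma line_coef_unique y1 y2 t1 t2 : Y y1 -> Y y2 ->
  (fun x => y1 x + t1 * f x) = (fun x => y2 x + t2 * f x) -> t1 = t2.
Proof.
move=> Y1 Y2 E; have := ler_line_coef (t1 - t2) (subspaceB HY Y1 Y2).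
have -> : (fun x => y1 x - y2 x + (t1 - t2) * f x) = (fun _ => 0).
  by apply: funext => x; have /= Ex := congr1 (fun g => g x) E; lra.
rewrite dual_norm0 pmulr_lle0 // normr_le0 subr_eq0; exact/eqP.
Qed.

Lemma line_coefE y t : Y y -> line_coef (fun x => y x + t * f x) = t.
Proof.
move=> Yy; have : exists t' y', Y y' /\ (fun x => y x + t * f x) = (fun x => y' x + t' * f x).
  by exists t, y.
by move=> /(xgetPex 0) [y' [Yy' E]]; exact/esym/(line_coef_unique Yy Yy' E).
Qed.

Lemma line_coef_linear : linear_on line_ext line_coef.
Proof.
split=> [_ _ [y1 [t1 [Y1 ->]]] [y2 [t2 [Y2 ->]]] | a _ [y [t [Yy ->]]]].
  rewrite (_ : (fun x => y1 x + t1 * f x + (y2 x + t2 * f x)) =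
               (fun x => (y1 x + y2 x) + (t1 + t2) * f x)); last by apply: funext => x; ring.
  by rewrite !line_coefE //; exact: subspaceD.
rewrite (_ : (fun x => a * (y x + t * f x)) = (fun x => a * y x + (a * t) * f x)); last first.
  by apply: funext => x; ring.
by rewrite !line_coefE //; exact: subspaceZ.
Qed.

Lemma line_coef_seq_continuous : ~ S1 Y f -> wstar_seq_continuous line_ext line_coef.
Proof.
move=> notS1 u _ Yu [y [t [Yy ->]]] ug.
have /choice [p pP] : forall n, exists p : (X -> R) * R,
    Y p.1 /\ u n = (fun x => p.1 x + p.2 * f x).
  by move=> n; have [yn [tn [Yn ->]]] := Yu n; exists (yn, tn).
rewrite line_coefE // (_ : (fun n => line_coef (u n)) = fun n => (p n).2); last first.
  by apply: funext => n; rewrite (pP n).2 line_coefE //; exact: (pP n).1.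
apply: contrapT => /not_cvg_far [d d0 [m mP]]; apply: notS1; split=> //.
(* With [k = m N]: [v N - f = (g - u k) / (t_k - t)], and [|t_k - t| >= d]. *)
pose v N x := ((p (m N)).2 - t)^-1 * (y x - (p (m N)).1 x).
exists v; split=> [N|x]; first exact: (subspaceZ HY _ (subspaceB HY Yy (pP _).1)).
apply/cvgrPdist_lt => eps eps0.
have /(near_oo_subseq (fun N => (mP N).1)) : \forall n \near \oo, `|y x + t * f x - u n x| < eps * d.
  exact: (cvgr_dist_lt _ _ (ug x) _ (mulr_gt0 eps0 d0)).
apply: filterS => N; have [_ dle] := mP N; rewrite (pP (m N)).2 /v.
set tN := (p (m N)).2; set yN := (p (m N)).1 => close; rewrite -/tN in dle.
have tN_neq0 : tN - t != 0 by rewrite -normr_gt0 distrC (lt_le_trans d0 dle).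
have -> : f x - (tN - t)^-1 * (y x - yN x) =
          (tN - t)^-1 * (yN x + tN * f x - (y x + t * f x)) by field.
rewrite normrM normrV ?unitfE // ltr_pdivrMl ?normr_gt0 // distrC.
by apply: lt_le_trans close _; rewrite mulrC ler_wpM2r ?(ltW eps0) // distrC.
Qed.

Lemma line_ext_closed : norm_closed Y -> norm_closed line_ext.
Proof.
move=> Yc g Dg g_lim.
have /choice [p pP] : forall n : nat, exists p : (X -> R) * R,
    Y p.1 /\ dual_norm (fun x => g x - (p.1 x + p.2 * f x)) < n.+1%:R^-1.
  move=> n; have /g_lim [_ [[y [t [Yy ->]]] gyt]] : 0 < n.+1%:R^-1 :> R by rewrite invr_gt0.
  by exists (y, t).
pose d n x := g x - ((p n).1 x + (p n).2 * f x).
have Dd n : dual (d n).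
  exact: (dualB Dg (dualD (subspace_dual HY (pP n).1) (dualZ _ Df))).
have t_cauchy n m : `|(p n).2 - (p m).2| <= (n.+1%:R^-1 + m.+1%:R^-1) * e^-1.
  rewrite ler_pdivlMr //; apply: le_trans (ler_line_coef _ (subspaceB HY (pP n).1 (pP m).1)) _.
  rewrite (_ : (fun x => _ - _ + _ * f x) = (fun x => d m x - d n x)); last first.
    by apply: funext => x; rewrite /d; ring.
  apply: le_trans (ler_dual_normB (Dd m) (Dd n)) _.
  by rewrite addrC; apply: lerD; apply: ltW; exact: (pP _).2.
have [t tP] := cauchy_harmonic t_cauchy.
have YG : Y (fun x => g x - t * f x).
  apply: Yc => [|eps eps0]; first exact: (dualB Dg (dualZ t Df)).
  near \oo => n; exists (p n).1; split; first exact: (pP n).1.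
  rewrite (_ : (fun x => _ - _ - _) = (fun x => d n x + ((p n).2 - t) * f x)); last first.
    by apply: funext => x; rewrite /d; ring.
  apply: le_lt_trans (ler_dual_normD (Dd n) (dualZ _ Df)) _.
  apply: le_lt_trans (lerD (ltW (pP n).2) (ler_dual_normZ _ Df)) _.
  rewrite distrC; apply: le_lt_trans (lerD (lexx _) (ler_wpM2r (dual_norm_ge0 Df) (tP n))) _.
  rewrite -mulrA -[X in X + _]mulr1 -mulrDr; near: n; exact: harmonicM_lt.
by exists (fun x => g x - t * f x), t; split=> //; apply: funext => x; rewrite subrK.
Unshelve. all: by end_near. Qed.

End LineExtension.

Lemma fully_Mazur_S1_full (R : realType) (X : normedModType R) : fully_Mazur X ->
  forall Y : set (X -> R), dual_subspace Y -> norming Y -> norm_closed Y -> S1 Y = @dual R X.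
Proof.
move=> FM Y HY YN Yc; apply/seteqP; split=> [f [] // | f Df].
apply: contrapT => notS1.
have Yf : ~ Y f.
  by move=> Yf; apply: notS1; split=> //; exists (fun=> f); split=> // x; exact: cvg_cst.
have [e e0 dist_fY] := norm_closed_dist_gt0 Yc Df Yf.
have ext := line_ext_subspace HY Df.
have coefL := line_coef_linear HY Df e0 dist_fY.
have := FM _ ext (line_ext_norming HY Df YN) (line_ext_closed HY Df e0 dist_fY Yc) _ coefL
  (line_coef_seq_continuous HY Df e0 dist_fY notS1).
move=> /(_ _ (subspace0 ext) 1 ltr01) [s [d [d0 sd]]].
have [y Yy yf] := separating_interpolation HY (fun _ => norming_separating HY YN) s Df.1.
have Yh : line_ext Y f (fun x => (-1) * y x + 1 * f x) by exists (fun x => (-1) * y x), 1; split; first exact: (subspaceZ HY _ Yy).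
have := sd _ Yh; rewrite (line_coefE HY Df e0 dist_fY 1 (subspaceZ HY _ Yy)) (linear_on0 ext coefL).
rewrite subr0 normr1 ltxx => contra; suff : false by []; apply: contra => x xs.
by rewrite yf // mulN1r mul1r addNr subr0 normr0.
Qed.

Theorem theorem3p3 (R : realType) (X : completeNormedModType R) :
  fully_Mazur X <->
  (forall Y : set (X -> R), dual_subspace Y -> norming Y -> norm_closed Y ->
     S1 Y = @dual R X).
Proof. by split; [exact: fully_Mazur_S1_full | exact: S1_full_fully_Mazur]. Qed.
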